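(* Assume $f$ is strongly convex on $\mathrm{dom}\,\psi$ with parameter $\mu>0$ (i.e. $\langle\nabla^2 f(x)h,h\rangle \ge \mu\|h\|^2$ for all $x\in\mathrm{dom}\,\psi$, $h\in\mathbb{E}$). Consider the method: choose $H \ge L_2$, $x_0 \in \mathrm{dom}\,\psi$ and $F'_0 \in \partial F(x_0)$; for $k \ge 0$ set $g_k = \|F'_k\|_*$, $A_k = \frac{1}{\sigma}\sqrt{\frac{H}{3}g_k}$, $x_{k+1} = T_{A_k}(x_k)$, and $$F'_{k+1} = \nabla f(x_{k+1}) - \nabla f(x_k) - \nabla^2 f(x_k)(x_{k+1} - x_k) - A_k(\nabla d(x_{k+1}) - \nabla d(x_k)).$$ Then for any $k\ge 0$, $$\|F'_{k+1}\|_* \;\le\; \frac{2c}{\mu}\sqrt{\frac{H}{3}}\,\|F'_k\|_*^{3/2}, \qquad c = \sigma^{-1} + \frac{3L_2}{2H}.$$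
   Context: $\mathbb{E}$ is a finite-dimensional real vector space with an arbitrary norm $\|\cdot\|$; $\mathbb{E}^*$ is its dual with dual norm $\|g\|_* = \max\{\langle g, x\rangle : \|x\|\le 1\}$; for a self-adjoint linear operator $B:\mathbb{E}\to\mathbb{E}^*$, $\|B\| = \max\{|\langle Bx,x\rangle| : \|x\|\le 1\}$. $F = f + \psi$, where $\psi$ is a closed convex function with $\mathrm{dom}\,\psi \subseteq \mathbb{E}$ and $f$ is convex and twice continuously differentiable with $\|\nabla^2 f(x) - \nabla^2 f(y)\| \le L_2\|x-y\|$ for all $x,y\in\mathrm{dom}\,\psi$. The scaling function $d$ is differentiable and satisfies, for some $\sigma\in(0,1]$ and all $x,y \in \mathrm{dom}\,\psi$: $d(y) \ge d(x) + \langle \nabla d(x), y-x\rangle + \frac{\sigma}{2}\|y-x\|^2$ and $\|\nabla d(x) - \nabla d(y)\|_* \le \|x-y\|$. Bregman distance: $\rho(x,y) = d(y) - d(x) - \langle \nabla d(x), y-x\rangle$. For $\bar x\in\mathrm{dom}\,\psi$ and $A>0$, $$T_A(\bar x) = \arg\min_{y\in\mathrm{dom}\,\psi}\Big[ f(\bar x) + \langle \nabla f(\bar x), y-\bar x\rangle + \tfrac12 \langle \nabla^2 f(\bar x)(y-\bar x), y-\bar x\rangle + A\rho(\bar x,y) + \psi(y)\Big].$$ (Each $F'_k$ is an element of $\partial F(x_k)$.) *)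

From HB Require Import structures.
From mathcomp Require Import all_boot all_order all_algebra.
From mathcomp Require Import all_classical all_reals all_analysis.
Set Implicit Arguments. Unset Strict Implicit. Unset Printing Implicit Defensive.
Import Order.TTheory GRing.Theory Num.Theory.
Import numFieldNormedType.Exports.
Local Open Scope classical_set_scope.
Local Open Scope ring_scope.

(* E = 'rV[R]_n, E* = 'rV[R]_n with the pairing <g, x> = sum_i g_i x_i.
   A self-adjoint operator B : E -> E* is a matrix B : 'M_n acting by
   x |-> x *m B. *)

Definition pair {R : realType} {n : nat} (g x : 'rV[R]_n) : R :=
  \sum_(i < n) g ord0 i * x ord0 i.

Definition is_norm {R : realType} {n : nat} (N : 'rV[R]_n -> R) : Prop :=
  [/\ forall x, N x = 0 -> x = 0,
      forall (a : R) x, N (a *: x) = `|a| * N x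
    & forall x y, N (x + y) <= N x + N y].

Definition dual_norm {R : realType} {n : nat} (N : 'rV[R]_n -> R)
  (g : 'rV[R]_n) : R :=
  sup [set pair g x | x in [set x | N x <= 1]].

Definition op_norm {R : realType} {n : nat} (N : 'rV[R]_n -> R)
  (B : 'M[R]_n) : R :=
  sup [set `|pair (x *m B) x| | x in [set x | N x <= 1]].

(* Subdifferential of F = f + psi (F = +oo outside dom psi = D) at x in D. *)
Definition subdiff {R : realType} {n : nat} (D : set 'rV[R]_n)
  (F : 'rV[R]_n -> R) (x : 'rV[R]_n) : set 'rV[R]_n :=
  [set g | forall y, D y -> F x + pair g (y - x) <= F y].

Definition bregman {R : realType} {n : nat} (d : 'rV[R]_n -> R)
  (gd : 'rV[R]_n -> 'rV[R]_n) (x y : 'rV[R]_n) : R :=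
  d y - d x - pair (gd x) (y - x).

Definition model {R : realType} {n : nat} (f psi d : 'rV[R]_n -> R)
  (gf gd : 'rV[R]_n -> 'rV[R]_n) (Hf : 'rV[R]_n -> 'M[R]_n)
  (A : R) (xbar y : 'rV[R]_n) : R :=
  f xbar + pair (gf xbar) (y - xbar)
  + 2^-1 * pair ((y - xbar) *m Hf xbar) (y - xbar)
  + A * bregman d gd xbar y + psi y.

Definition is_T {R : realType} {n : nat} (D : set 'rV[R]_n)
  (f psi d : 'rV[R]_n -> R) (gf gd : 'rV[R]_n -> 'rV[R]_n)
  (Hf : 'rV[R]_n -> 'M[R]_n) (A : R) (xbar y : 'rV[R]_n) : Prop :=
  D y /\ forall z, D z -> model f psi d gf gd Hf A xbar y <= model f psi d gf gd Hf A xbar z.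

Definition convex_set {R : realType} {n : nat} (D : set 'rV[R]_n) : Prop :=
  forall x y (t : R), D x -> D y -> 0 <= t <= 1 -> D (t *: x + (1 - t) *: y).

Definition convex_on {R : realType} {n : nat} (D : set 'rV[R]_n)
  (g : 'rV[R]_n -> R) : Prop :=
  forall x y (t : R), D x -> D y -> 0 <= t <= 1 ->
    g (t *: x + (1 - t) *: y) <= t * g x + (1 - t) * g y.

(* psi : E -> R U {+oo} is represented by its values on its domain D;
   closed = the epigraph is closed. *)
Definition closed_convex_fun {R : realType} {n : nat} (D : set 'rV[R]_n)
  (psi : 'rV[R]_n -> R) : Prop :=
  [/\ convex_set D, convex_on D psi
    & closed [set p : 'rV[R]_n * R | D p.1 /\ psi p.1 <= p.2]].

(* Write r = N (x_{k+1} - x_k).  The optimality condition of the model minimized by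
   T_A says that F'_{k+1} - grad f (x_{k+1}) is a subgradient of psi at x_{k+1}; for
   k = 0 this holds because F'_0 is a subgradient of f + psi and f is differentiable.
   Monotonicity of the subdifferential of psi between x_k and x_{k+1}, together with
   the strong convexity of f and of d, gives (mu + sigma A_k) r^2 <= ||F'_k||_* r.
   The Lipschitz Hessian and the Lipschitz gradient of d give
   ||F'_{k+1}||_* <= L2 r^2 + A_k r, and the choice of A_k eliminates r.
   The Hessian is symmetric (Schwarz, from its continuity); this is what turns the
   optimality condition into the formula for F'_{k+1} and lets polarization bound the
   bilinear form of Hf y - Hf x by its quadratic form.  Since op_norm is the
   quadratic-form norm, polarization costs a factor 2 and the Taylor remainder is only
   bounded by L2 r^2, which the constant c still absorbs. *)

From Pilot Require Import Defs.
From HB Require Import structures.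
From mathcomp Require Import all_boot all_order all_algebra.
From mathcomp Require Import all_classical all_reals all_analysis.
From mathcomp Require Import ring lra.
Import Order.TTheory GRing.Theory Num.Theory.
Import numFieldNormedType.Exports.
Local Open Scope classical_set_scope.
Local Open Scope ring_scope.
Set Implicit Arguments. Unset Strict Implicit. Unset Printing Implicit Defensive.

Section Pairing.
Variables (R : realType) (n : nat).
Implicit Types (g x : 'rV[R]_n) (M : 'M[R]_n).

Lemma pairDl g1 g2 x : pair (g1 + g2) x = pair g1 x + pair g2 x.
Proof. by rewrite /pair -big_split; apply: eq_bigr => i _; rewrite mxE mulrDl. Qed.

Lemma pairDr g x1 x2 : pair g (x1 + x2) = pair g x1 + pair g x2.
Proof. by rewrite /pair -big_split; apply: eq_bigr => i _; rewrite mxE mulrDr. Qed.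

Lemma pairZl a g x : pair (a *: g) x = a * pair g x.
Proof. by rewrite /pair mulr_sumr; apply: eq_bigr => i _; rewrite mxE mulrA. Qed.

Lemma pairZr a g x : pair g (a *: x) = a * pair g x.
Proof. by rewrite /pair mulr_sumr; apply: eq_bigr => i _; rewrite mxE mulrCA. Qed.

Lemma pairNl g x : pair (- g) x = - pair g x.
Proof. by rewrite -scaleN1r pairZl mulN1r. Qed.

Lemma pairNr g x : pair g (- x) = - pair g x.
Proof. by rewrite -scaleN1r pairZr mulN1r. Qed.

Lemma pairBl g1 g2 x : pair (g1 - g2) x = pair g1 x - pair g2 x.
Proof. by rewrite pairDl pairNl. Qed.

Lemma pair0l x : pair 0 x = 0.
Proof. by rewrite -(scale0r 0) pairZl mul0r. Qed.

Lemma pair0r g : pair g 0 = 0.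
Proof. by rewrite -(scale0r 0) pairZr mul0r. Qed.

Lemma mx_norm_coord_le (m k : nat) (A : 'M[R]_(m, k)) i j : `|A i j| <= `|A|.
Proof.
rewrite [leRHS]/Num.Def.normr /= mx_normrE.
by apply: le_trans (le_bigmax _ _ (i, j)) => /=.
Qed.

Lemma mx_norm_le (m k : nat) (A : 'M[R]_(m, k)) c :
  0 <= c -> (forall i j, `|A i j| <= c) -> `|A| <= c.
Proof.
move=> c0 Ac; rewrite [leLHS]/Num.Def.normr /= mx_normrE.
by apply: bigmax_le => // -[i j] _; exact: Ac.
Qed.

Lemma pair_norm_le g x : `|pair g x| <= n%:R * `|g| * `|x|.
Proof.
rewrite /pair; apply: le_trans (ler_norm_sum _ _ _) _.
apply: le_trans (_ : \sum_(i < n) (`|g| * `|x|) <= _).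
  by apply: ler_sum => i _; rewrite normrM ler_pM ?mx_norm_coord_le.
by rewrite sumr_const card_ord mulr_natl mulrnAl.
Qed.

Lemma mulmx_norm_le x M : `|x *m M| <= n%:R * `|x| * `|M|.
Proof.
apply: mx_norm_le => [|i j]; first by rewrite !mulr_ge0.
rewrite mxE; apply: le_trans (ler_norm_sum _ _ _) _.
apply: le_trans (_ : \sum_(k < n) (`|x| * `|M|) <= _).
  by apply: ler_sum => k _; rewrite normrM ler_pM ?mx_norm_coord_le.
by rewrite sumr_const card_ord mulr_natl mulrnAl.
Qed.

Lemma pair_mulmx_norm_le u M v :
  `|pair (u *m M) v| <= n%:R * n%:R * `|u| * `|v| * `|M|.
Proof.
apply: le_trans (pair_norm_le _ _) _.
rewrite [leRHS](_ : _ = n%:R * (n%:R * `|u| * `|M|) * `|v|); last by ring.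
by rewrite ler_wpM2r ?ler_wpM2l ?mulmx_norm_le.
Qed.

Lemma quad_shift (B : 'M[R]_n) a v t :
  (forall u w, pair (u *m B) w = pair (w *m B) u) ->
  pair ((a + t *: v) *m B) (a + t *: v)
  = pair (a *m B) a + 2 * t * pair (a *m B) v + t ^+ 2 * pair (v *m B) v.
Proof.
move=> symB; rewrite mulmxDl -scalemxAl !pairDl !pairDr !pairZl !pairZr (symB v).
by ring.
Qed.

End Pairing.

Section Norm.
Variables (R : realType) (n : nat) (N : 'rV[R]_n -> R).
Hypothesis hN : is_norm N.
Implicit Types (g x y : 'rV[R]_n).

Lemma NZ a x : N (a *: x) = `|a| * N x.
Proof. by case: hN => _ + _; apply. Qed.

Lemma ler_ND x y : N (x + y) <= N x + N y.
Proof. by case: hN => _ _; apply. Qed.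

Lemma N_eq0 x : N x = 0 -> x = 0.
Proof. by case: hN => + _ _; apply. Qed.

Lemma N0 : N 0 = 0.
Proof. by rewrite -(scale0r (0 : 'rV[R]_n)) NZ normr0 mul0r. Qed.

Lemma NN x : N (- x) = N x.
Proof. by rewrite -scaleN1r NZ normrN normr1 mul1r. Qed.

Lemma N_ge0 x : 0 <= N x.
Proof. by have := ler_ND x (- x); rewrite subrr N0 NN; lra. Qed.

Lemma N_gt0 x : x != 0 -> 0 < N x.
Proof. by move=> x0; rewrite lt_neqAle N_ge0 andbT; apply: contra_neq x0 => /esym/N_eq0. Qed.

Lemma N_normalize x : x != 0 -> N ((N x)^-1 *: x) = 1.
Proof. by move=> /N_gt0 Nx; rewrite NZ gtr0_norm ?invr_gt0 // mulVf ?gt_eqF. Qed.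

Lemma ler_dist_N x y : `|N x - N y| <= N (x - y).
Proof.
have NC : N (y - x) = N (x - y) by rewrite -NN opprB.
have := ler_ND (x - y) y; have := ler_ND (y - x) x.
by rewrite !subrK NC ler_norml; lra.
Qed.

Lemma N_le_mx_norm : exists2 M, 0 <= M & forall x, N x <= M * `|x|.
Proof.
exists (\sum_(j < n) N (delta_mx 0 j)); first by rewrite sumr_ge0 // => j _; apply: N_ge0.
move=> x; rewrite [x in N x]row_sum_delta mulr_suml.
elim/big_ind2 : _ => [|a b c e|j _]; first by rewrite N0.
  by move=> ab ce; apply: le_trans (ler_ND _ _) (lerD ab ce).
by rewrite NZ mulrC ler_wpM2l ?N_ge0 ?mx_norm_coord_le.
Qed.

Lemma continuous_N : continuous N.
Proof.
have [M M0 NM] := N_le_mx_norm.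
move=> x; apply/(@cvgrPdist_lt R R^o _ (nbhs x) (nbhs_filter x)) => e e0.
apply/nbhs_ballP; exists (e / (M + 1)) => /=; first by rewrite divr_gt0 //; lra.
move=> y; rewrite -ball_normE /= => xy.
apply: le_lt_trans (ler_dist_N x y) _; apply: le_lt_trans (NM _) _.
apply: le_lt_trans (_ : _ <= (M + 1) * `|x - y|) _; first by rewrite ler_wpM2r //; lra.
by rewrite mulrC -ltr_pdivlMr //; lra.
Qed.

Lemma mx_norm_le_N : exists2 C, 0 < C & forall x, `|x| <= C * N x.
Proof.
set S := [set x : 'rV[R]_n | `|x| = 1].
have [[c0 Sc0]|S0] := pselect (S !=set0); last first.
  exists 1 => // x; have [->|x0] := eqVneq x 0; first by rewrite normr0 N0 mulr0.
  exfalso; apply: S0; exists (`|x|^-1 *: x).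
  by rewrite /S /= normrZ normrV ?unitfE ?normr_eq0 // normr_id mulVf ?normr_eq0.
have cS : compact S.
  apply: bounded_closed_compact; first by exists 1; split => //= M M1 x ->; apply: ltW.
  have -> : S = Num.norm @^-1` [set 1] by [].
  by apply: closed_comp => [x _|]; [exact: norm_continuous|exact: closed_eq].
have [c Sc cmin] := EVT_min_rV (ex_intro _ c0 Sc0) cS (continuous_subspaceT continuous_N).
rewrite inE /S /= in Sc.
have c_neq0 : c != 0 by apply: contra_eq_neq Sc => ->; rewrite normr0 eq_sym oner_eq0.
have Nc := N_gt0 c_neq0.
exists (N c)^-1 => [|x]; first by rewrite invr_gt0.
have [->|x0] := eqVneq x 0; first by rewrite normr0 N0 mulr0.
have nx : 0 < `|x| by rewrite normr_gt0.
have := cmin (`|x|^-1 *: x); rewrite inE /S /= normrZ normrV ?unitfE ?normr_eq0 //.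
rewrite normr_id mulVf ?normr_eq0 // => /(_ erefl).
rewrite NZ normrV ?unitfE ?normr_eq0 // normr_id => le_c.
rewrite mulrC ler_pdivlMr //; apply: le_trans (ler_wpM2l (ltW nx) le_c) _.
by rewrite mulrA mulfV ?mul1r // gt_eqF.
Qed.

Lemma N_ball_bounded : exists2 C, 0 < C & forall y, N y <= 1 -> `|y| <= C.
Proof.
have [C C0 CN] := mx_norm_le_N; exists C => // y y1.
by apply: le_trans (CN y) _; rewrite -[leRHS]mulr1 ler_wpM2l // ltW.
Qed.

Lemma has_sup_dual_norm g : has_sup [set pair g y | y in [set y | N y <= 1]].
Proof.
have [C C0 bC] := N_ball_bounded; split; first by exists (pair g 0), 0 => //=; rewrite N0.
exists (n%:R * `|g| * C) => _ [y /= y1 <-].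
apply: le_trans (ler_norm _) _; apply: le_trans (pair_norm_le _ _) _.
by rewrite ler_wpM2l ?mulr_ge0 ?bC.
Qed.

Lemma dual_norm_ge0 g : 0 <= dual_norm N g.
Proof.
apply: (sup_upper_bound (has_sup_dual_norm g)).
by exists 0; rewrite /= ?N0 ?pair0r.
Qed.

Lemma pair_le_dual_norm g x : pair g x <= dual_norm N g * N x.
Proof.
have [->|x0] := eqVneq x 0; first by rewrite pair0r N0 mulr0.
have : pair g ((N x)^-1 *: x) <= dual_norm N g.
  apply: (sup_upper_bound (has_sup_dual_norm g)).
  by exists ((N x)^-1 *: x); rewrite //= N_normalize.
by rewrite pairZr mulrC ler_pdivrMr ?N_gt0.
Qed.

Lemma dual_norm_le g c : (forall y, N y <= 1 -> pair g y <= c) -> dual_norm N g <= c.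
Proof.
move=> gc; apply: ge_sup; first by exists (pair g 0), 0 => //=; rewrite N0.
by move=> _ [y /= y1 <-]; apply: gc.
Qed.

Lemma has_sup_op_norm (B : 'M[R]_n) :
  has_sup [set `|pair (x *m B) x| | x in [set x | N x <= 1]].
Proof.
have [C C0 bC] := N_ball_bounded.
split; first by exists `|pair (0 *m B) 0|, 0 => //=; rewrite N0.
exists (n%:R * n%:R * C * C * `|B|) => _ [y /= y1 <-].
apply: le_trans (pair_mulmx_norm_le _ _ _) _.
by rewrite ler_wpM2r // ler_pM ?mulr_ge0 ?bC // ler_wpM2l ?mulr_ge0 ?bC.
Qed.

Lemma quad_le_op_norm (B : 'M[R]_n) x : `|pair (x *m B) x| <= op_norm N B * N x ^+ 2.
Proof.
have [->|x0] := eqVneq x 0; first by rewrite pair0r N0 normr0 expr0n mulr0.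
have : `|pair (((N x)^-1 *: x) *m B) ((N x)^-1 *: x)| <= op_norm N B.
  apply: (sup_upper_bound (has_sup_op_norm B)).
  by exists ((N x)^-1 *: x); rewrite //= N_normalize.
rewrite -scalemxAl pairZl pairZr mulrA normrM ger0_norm ?mulr_ge0 ?invr_ge0 ?N_ge0 //.
by rewrite -expr2 exprVn mulrC ler_pdivrMr ?exprn_gt0 ?N_gt0.
Qed.

Lemma polarization_le (M : 'M[R]_n) c h v : 0 <= c ->
  (forall u w, pair (u *m M) w = pair (w *m M) u) ->
  (forall w, `|pair (w *m M) w| <= c * N w ^+ 2) -> N v <= 1 ->
  pair (h *m M) v <= 2 * c * N h.
Proof.
move=> c0 symM QM v1.
have [->|h0] := eqVneq h 0; first by rewrite mul0mx pair0l N0 mulr0.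
set r := N h; have r0 : 0 < r := N_gt0 h0.
have quad_le s : `|s| <= r -> `|pair ((h + s *: v) *m M) (h + s *: v)| <= 4 * c * r ^+ 2.
  move=> sr; apply: le_trans (QM _) _.
  have Nhv : N (h + s *: v) <= 2 * r.
    apply: le_trans (ler_ND _ _) _; rewrite NZ // -/r.
    by have := N_ge0 v; have := normr_ge0 s; nra.
  rewrite [leRHS](_ : _ = c * (2 * r) ^+ 2); last by ring.
  by rewrite ler_wpM2l // lerXn2r // nnegrE ?N_ge0 // mulr_ge0 // ltW.
have := quad_le r; have := quad_le (- r).
rewrite normrN gtr0_norm // !quad_shift // !ler_norml sqrrN.
by move=> /(_ (lexx _)) /andP[qm _] /(_ (lexx _)) /andP[_ qp]; nra.
Qed.

End Norm.

Section Dini.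
Variables (R : realType) (n : nat).
Implicit Types (phi : 'rV[R]_n -> R) (x y v : 'rV[R]_n).

Definition dini_le phi y v (l : R) :=
  forall e : R, 0 < e ->
    \forall t \near (0 : R)^'+, phi (y + t *: v) - phi y <= t * (l + e).

Lemma dini_le_derive phi y v : derivable phi y v -> dini_le phi y v ('D_v phi y).
Proof.
move=> dphi e e0; have := cvg_dnbhs_at_right dphi.
move/cvgrPdist_le => /(_ e e0) near_D.
apply: filterS2 near_D (nbhs_right_gt 0) => t /= Dt t0.
(* [Dt] is stated with the norm of [R] as a normed module. *)
have : `|'D_v phi y - t^-1 * (phi (t *: v + y) - phi y)| <= e := Dt.
rewrite ler_distlC => /andP[_].
by rewrite ler_pdivrMl // (addrC y).
Qed.

Lemma dini_le_lin phi y v l :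
  (forall t, phi (y + t *: v) - phi y = t * l) -> dini_le phi y v l.
Proof.
move=> incr e e0; apply: filterS (nbhs_right_gt 0) => t t0.
by rewrite incr ler_pM2l // lerDl ltW.
Qed.

Lemma dini_leD phi1 phi2 y v l1 l2 :
  dini_le phi1 y v l1 -> dini_le phi2 y v l2 ->
  dini_le (fun u => phi1 u + phi2 u) y v (l1 + l2).
Proof.
move=> d1 d2 e e0; have e20 : 0 < e / 2 by rewrite divr_gt0.
apply: filterS2 (d1 _ e20) (d2 _ e20) => t t1 t2.
have -> : t * (l1 + l2 + e) = t * (l1 + e / 2) + t * (l2 + e / 2) by field.
lra.
Qed.

Lemma dini_leZ a phi y v l :
  0 <= a -> dini_le phi y v l -> dini_le (fun u => a * phi u) y v (a * l).
Proof.
rewrite le_eqVlt => /predU1P[<- _|a0 dphi].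
  by apply: dini_le_lin => t; rewrite !mul0r subr0 mulr0.
move=> e e0; apply: filterS (dphi _ (divr_gt0 e0 a0)) => t tl.
have -> : t * (a * l + e) = a * (t * (l + e / a)) by field; rewrite gt_eqF.
by rewrite -mulrBr ler_pM2l.
Qed.

Lemma dini_le_quad (B : 'M[R]_n) x y v :
  (forall u w, pair (u *m B) w = pair (w *m B) u) ->
  dini_le (fun u => 2^-1 * pair ((u - x) *m B) (u - x)) y v (pair ((y - x) *m B) v).
Proof.
move=> symB e e0; set Q := pair (v *m B) v; set l := pair ((y - x) *m B) v.
have incr t : 2^-1 * pair ((y + t *: v - x) *m B) (y + t *: v - x)
              - 2^-1 * pair ((y - x) *m B) (y - x) = t * l + t ^+ 2 / 2 * Q.
  by rewrite addrAC quad_shift // -/Q -/l; field.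
have Q1 : 0 < `|Q| + 1 by rewrite ltr_pwDr.
near=> t; rewrite incr.
have t0 : 0 < t by near: t; exact: nbhs_right_gt.
have tQ : t * `|Q| <= e.
  have : t < e / (`|Q| + 1) by near: t; apply: nbhs_right_lt; rewrite divr_gt0.
  by rewrite ltr_pdivlMr // => /ltW; nra.
have := ler_norm Q; nra.
Unshelve. all: by end_near.
Qed.

End Dini.

Section ConvexAnalysis.
Variables (R : realType) (n : nat) (D : set 'rV[R]_n).
Hypothesis cD : Defs.convex_set D.
Implicit Types (phi psi : 'rV[R]_n -> R) (g x y z : 'rV[R]_n).

Lemma convex_combE (t : R) z x : t *: z + (1 - t) *: x = x + t *: (z - x).
Proof. by apply/rowP => i; rewrite !mxE; ring. Qed.

Lemma convex_set_segment x z (t : R) :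
  D x -> D z -> 0 <= t <= 1 -> D (x + t *: (z - x)).
Proof. by move=> Dx Dz t01; rewrite -convex_combE; apply: cD. Qed.

Lemma convex_on_segment psi x z (t : R) : convex_on D psi -> D x -> D z ->
  0 <= t <= 1 -> psi (x + t *: (z - x)) <= t * psi z + (1 - t) * psi x.
Proof. by move=> cpsi Dx Dz t01; rewrite -convex_combE; apply: cpsi. Qed.

Lemma subdiff_sum_smooth phi psi y g gphi :
  convex_on D psi -> D y ->
  (forall z, D z -> phi y + psi y + pair g (z - y) <= phi z + psi z) ->
  (forall z, D z -> dini_le phi y (z - y) (pair gphi (z - y))) ->
  subdiff D psi y (g - gphi).
Proof.
move=> cpsi Dy ymin dphi z Dz; set v := z - y.
apply/ler_addgt0Pr => e e0.
near (0 : R)^'+ => t.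
have t0 : 0 < t by near: t; exact: nbhs_right_gt.
have t01 : 0 <= t <= 1 by rewrite ltW //=; near: t; exact: nbhs_right_le.
have phit : phi (y + t *: v) - phi y <= t * (pair gphi v + e) by near: t; exact: dphi.
have := ymin _ (convex_set_segment Dy Dz t01).
have := convex_on_segment cpsi Dy Dz t01.
have -> : y + t *: v - y = t *: v by rewrite addrC addKr.
rewrite pairZr pairBl => psit mint.
by rewrite -(ler_pM2l t0); nra.
Unshelve. all: by end_near.
Qed.

Lemma subdiff_monotone psi x y g1 g2 : D x -> D y ->
  subdiff D psi x g1 -> subdiff D psi y g2 -> 0 <= pair (g2 - g1) (y - x).
Proof.
move=> Dx Dy s1 s2; have := s1 y Dy; have := s2 x Dx.
by rewrite -opprB pairNr pairBl; lra.
Qed.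

End ConvexAnalysis.

Section LineDerivative.
Variables (R : realType) (n : nat).

Lemma is_derive_line (W : normedModType R) (F : 'rV[R]_n -> W) p u t :
  derivable F (p + t *: u) u ->
  is_derive t 1 (fun s : R => F (p + s *: u)) ('D_u F (p + t *: u)).
Proof.
move=> dF.
have E : (fun h : R => h^-1 *: (((fun s : R => F (p + s *: u)) \o shift t) (h *: 1)
            - F (p + t *: u))) =
         (fun h : R => h^-1 *: ((F \o shift (p + t *: u)) (h *: u) - F (p + t *: u))).
  by apply: funext => h /=; rewrite [h *: 1]mulr1 scalerDl addrCA.
by apply: DeriveDef; [rewrite /derivable E | rewrite /derive E].
Qed.

Lemma derive_pair_l (V : normedModType R) (G : V -> 'rV[R]_n) a w v :
  derivable G a w ->
  derivable (fun q => pair (G q) v) a w /\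
  'D_w (fun q => pair (G q) v) a = pair ('D_w G a) v.
Proof.
move=> dG; have dGi i : derivable (fun q => G q ord0 i) a w by move/derivable_mxP: dG.
have -> : (fun q => pair (G q) v) = \sum_(i < n) (v ord0 i *: (fun q => G q ord0 i)).
  by apply: funext => q; rewrite /pair fct_sumE; apply: eq_bigr => i _; rewrite /= mulrC.
split; first by apply: derivable_sum => i; apply: derivableZ.
rewrite derive_sum => [|i]; last exact: derivableZ.
rewrite (derive_mx dG) /pair; apply: eq_bigr => i _.
by rewrite deriveZ // mxE mulrC.
Qed.

(* MVT applied to [g t - K t^2]. *)
Lemma increment_le_of_derive_le (g dg : R -> R) (K : R) :
  (forall t : R, is_derive t 1 g (dg t)) -> (forall t, 0 <= t <= 1 -> dg t <= 2 * K * t) ->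
  g 1 - g 0 <= K.
Proof.
move=> gd dgK; set h := g - K \*: (@id R ^+ 2).
have hd (t : R) : is_derive t 1 h (dg t - K * (2 * t)).
  apply: is_derive_eq (is_deriveB (gd t) (is_deriveZ K (is_deriveX 2 (is_derive_id t 1)))) _.
  by rewrite expr1 [_%:A]mulr1.
have hc : {within `[0, 1], continuous h}.
  by apply: derivable_within_continuous => t _; exact: (@ex_derive _ _ _ _ _ _ _ (hd t)).
have [c c01 Ec] := MVT_segment ler01 (fun t _ => hd t) hc.
move: Ec; rewrite /h !fctE /= expr1n expr0n /= [K *: 1]mulr1 scaler0 !subr0 mulr1.
have := dgK c; rewrite in_itv /= in c01 => /(_ c01); lra.
Qed.

End LineDerivative.

Lemma norm_segment2_le (R : realType) (V : normedModType R) (p a b : V) (s xi eta : R) :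
  0 <= xi <= s -> 0 <= eta <= s -> `|p - (p + xi *: a + eta *: b)| <= s * (`|a| + `|b|).
Proof.
move=> /andP[xi0 xis] /andP[eta0 etas].
rewrite -addrA opprD addNKr normrN.
apply: le_trans (ler_normD _ _) _; rewrite !normrZ !ger0_norm // mulrDr.
by rewrite lerD // ler_wpM2r.
Qed.

Section HessianSymmetry.
Variables (R : realType) (n : nat).
Variables (f : 'rV[R]_n -> R) (gf : 'rV[R]_n -> 'rV[R]_n) (Hf : 'rV[R]_n -> 'M[R]_n).
Hypothesis df : forall y, differentiable f y.
Hypothesis dfE : forall y h, 'd f y h = pair (gf y) h.
Hypothesis dgf : forall y, differentiable gf y.
Hypothesis dgfE : forall y h, 'd gf y h = h *m Hf y.
Implicit Types (p q u v : 'rV[R]_n).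

Lemma is_derive_f_line p u (t : R) :
  is_derive t 1 (fun s : R => f (p + s *: u)) (pair (gf (p + t *: u)) u).
Proof.
have := is_derive_line (@diff_derivable _ _ _ f _ u (df (p + t *: u))).
by rewrite deriveE ?dfE.
Qed.

Lemma is_derive_gf_line p u v (t : R) :
  is_derive t 1 (fun s : R => pair (gf (p + s *: u)) v) (pair (u *m Hf (p + t *: u)) v).
Proof.
have [dpair Dpair] := derive_pair_l v (@diff_derivable _ _ _ gf _ u (dgf (p + t *: u))).
by have := is_derive_line dpair; rewrite Dpair deriveE ?dgfE.
Qed.

Lemma second_difference_mvt p u v (s : R) : 0 <= s -> exists xi eta : R,
  [/\ 0 <= xi <= s, 0 <= eta <= s &
  f (p + s *: v + s *: u) - f (p + s *: u) - f (p + s *: v) + f p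
    = s ^+ 2 * pair (v *m Hf (p + xi *: u + eta *: v)) u].
Proof.
move=> s0.
set al := fun tau : R => f (p + s *: v + tau *: u) - f (p + tau *: u).
have dal (tau : R) : is_derive tau 1 al
    (pair (gf (p + s *: v + tau *: u)) u - pair (gf (p + tau *: u)) u).
  by apply: is_deriveB; apply: is_derive_f_line.
have [xi xiI Exi] := MVT_segment s0 (fun tau _ => dal tau)
  (derivable_within_continuous (fun tau _ => @ex_derive _ _ _ _ _ _ _ (dal tau))).
set be := fun sg : R => pair (gf (p + xi *: u + sg *: v)) u.
have dbe (sg : R) : is_derive sg 1 be (pair (v *m Hf (p + xi *: u + sg *: v)) u).
  exact: is_derive_gf_line.
have [eta etaI Eeta] := MVT_segment s0 (fun sg _ => dbe sg)
  (derivable_within_continuous (fun sg _ => @ex_derive _ _ _ _ _ _ _ (dbe sg))).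
exists xi, eta; rewrite in_itv /= in xiI etaI; split => //.
have -> : f (p + s *: v + s *: u) - f (p + s *: u) - f (p + s *: v) + f p = al s - al 0.
  by rewrite /al !scale0r !addr0; lra.
rewrite Exi subr0 (addrAC p (s *: v)).
have -> : pair (gf (p + xi *: u + s *: v)) u - pair (gf (p + xi *: u)) u = be s - be 0.
  by rewrite /be scale0r addr0.
by rewrite Eeta subr0 expr2 -mulrA mulrC.
Qed.

Hypothesis cHf : continuous Hf.

Lemma hessian_pair_near p u v (e : R) : 0 < e ->
  exists2 d, 0 < d & forall q, `|p - q| < d ->
    `|pair (u *m Hf p) v - pair (u *m Hf q) v| <= e.
Proof.
move=> e0; set K := n%:R * n%:R * `|u| * `|v| + 1.
have K0 : 0 < K by rewrite ltr_pwDr // !mulr_ge0.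
have := (cvgrPdist_lt (FF := nbhs_filter p) Hf (Hf p)).1 (@cHf p) _ (divr_gt0 e0 K0).
move=> /nbhs_ballP [d d0 Hd]; exists d => // q pq.
have /Hd /= Hpq : ball p d q by rewrite -ball_normE.
rewrite -pairBl -mulmxBr; apply: le_trans (pair_mulmx_norm_le _ _ _) _.
have : `|Hf p - Hf q| * K <= e by rewrite -ler_pdivlMr // ltW.
by have := normr_ge0 (Hf p - Hf q); rewrite /K; nra.
Qed.

Lemma hessian_sym p u v : pair (u *m Hf p) v = pair (v *m Hf p) u.
Proof.
apply/eqP; rewrite -subr_eq0 -normr_le0; apply/ler_addgt0Pr => e e0; rewrite add0r.
have e2 : 0 < e / 2 by rewrite divr_gt0.
have [d1 d10 near_uv] := hessian_pair_near p u v e2.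
have [d2 d20 near_vu] := hessian_pair_near p v u e2.
set d := Num.min d1 d2; have d0 : 0 < d by rewrite lt_min d10.
set s := d / (`|u| + `|v| + 1).
have uv0 : 0 < `|u| + `|v| + 1 by rewrite ltr_pwDr // addr_ge0.
have s0 : 0 < s by rewrite divr_gt0.
have sd : s * (`|u| + `|v|) < d.
  by rewrite /s mulrAC ltr_pdivrMr // ltr_pM2l // ltrDl.
have [xi [eta [xiI etaI E1]]] := second_difference_mvt p u v (ltW s0).
have [xi' [eta' [xiI' etaI' E2]]] := second_difference_mvt p v u (ltW s0).
set q1 := p + xi *: u + eta *: v in E1; set q2 := p + xi' *: v + eta' *: u in E2.
(* Both sides are the second difference of [f] on the square spanned by [s u], [s v]. *)
have E : pair (v *m Hf q1) u = pair (u *m Hf q2) v.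
  apply: (mulfI (expf_neq0 2 (lt0r_neq0 s0))); rewrite -E1 -E2 (addrAC p (s *: v)); lra.
have q1d : `|p - q1| < d2.
  apply: le_lt_trans (norm_segment2_le _ _ _ xiI etaI) _.
  by apply: lt_le_trans sd _; rewrite ge_min lexx orbT.
have q2d : `|p - q2| < d1.
  apply: le_lt_trans (norm_segment2_le _ _ _ xiI' etaI') _.
  by rewrite addrC; apply: lt_le_trans sd _; rewrite ge_min lexx.
have := near_uv _ q2d; have := near_vu _ q1d; rewrite E.
move: (pair (u *m Hf p) v) (pair (v *m Hf p) u) (pair (u *m Hf q2) v) => a b c hb ha.
have -> : a - b = (a - c) - (b - c) by ring.
by apply: le_trans (ler_normB _ _) _; lra.
Qed.

End HessianSymmetry.

Definition newton_subgrad (R : realType) (n : nat) (gf gd : 'rV[R]_n -> 'rV[R]_n)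
  (Hf : 'rV[R]_n -> 'M[R]_n) (A : R) (x y : 'rV[R]_n) : 'rV[R]_n :=
  gf y - gf x - (y - x) *m Hf x - A *: (gd y - gd x).

Section NewtonStep.
Variables (R : realType) (n : nat) (N : 'rV[R]_n -> R) (D : set 'rV[R]_n).
Variables (psi f d : 'rV[R]_n -> R) (gf gd : 'rV[R]_n -> 'rV[R]_n).
Variables (Hf : 'rV[R]_n -> 'M[R]_n) (L2 : R).
Hypothesis hN : is_norm N.
Hypothesis cD : Defs.convex_set D.
Hypothesis dgf : forall y, differentiable gf y.
Hypothesis dgfE : forall y h, 'd gf y h = h *m Hf y.
Hypothesis symHf : forall p u w, pair (u *m Hf p) w = pair (w *m Hf p) u.
Hypothesis L20 : 0 <= L2.
Hypothesis HfLip : forall y z, D y -> D z -> op_norm N (Hf y - Hf z) <= L2 * N (y - z).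
Implicit Types (x y v : 'rV[R]_n).

Lemma gradient_taylor_le x y v : D x -> D y -> N v <= 1 ->
  pair (gf y - gf x - (y - x) *m Hf x) v <= L2 * N (y - x) ^+ 2.
Proof.
move=> Dx Dy v1; set h := y - x; set r := N h; set k := pair (h *m Hf x) v.
set g := (fun t : R => pair (gf (x + t *: h)) v) - k \*: @id R.
have -> : pair (gf y - gf x - h *m Hf x) v = g 1 - g 0.
  have xh : x + h = y by rewrite addrC subrK.
  by rewrite /g !fctE /= scale1r scale0r addr0 xh [k *: 1]mulr1 scaler0 subr0 !pairBl -/k; ring.
apply: (increment_le_of_derive_le (dg := fun t => pair (h *m (Hf (x + t *: h) - Hf x)) v)).
  move=> t; apply: is_derive_eq (is_deriveB (is_derive_gf_line dgf dgfE x h v t)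
    (is_deriveZ k (is_derive_id t 1))) _.
  by rewrite mulmxBr pairBl [k *: 1]mulr1.
move=> t t01; have t0 : 0 <= t by case/andP: t01.
set M := Hf (x + t *: h) - Hf x.
have opM : op_norm N M <= L2 * (t * r).
  by have := HfLip (convex_set_segment cD Dx Dy t01) Dx; rewrite addrAC subrr add0r NZ // ger0_norm.
have symM u w : pair (u *m M) w = pair (w *m M) u by rewrite !mulmxBr !pairBl !(symHf _ u).
have quadM w : `|pair (w *m M) w| <= L2 * (t * r) * N w ^+ 2.
  by apply: le_trans (quad_le_op_norm hN M w) _; rewrite ler_wpM2r ?exprn_ge0 ?N_ge0.
have := polarization_le hN h (mulr_ge0 L20 (mulr_ge0 t0 (N_ge0 hN h))) symM quadM v1.
by rewrite -/r [leRHS](_ : _ = 2 * (L2 * r ^+ 2) * t) //; ring.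
Qed.

Lemma dini_le_model x y v (A : R) : 0 <= A -> derivable d y v -> 'D_v d y = pair (gd y) v ->
  dini_le (model f (fun=> 0) d gf gd Hf A x) y v
    (pair (gf x + (y - x) *m Hf x + A *: (gd y - gd x)) v).
Proof.
move=> A0 dd ddE.
have lin_shift (g : 'rV[R]_n) t : pair g (y + t *: v - x) - pair g (y - x) = t * pair g v.
  by rewrite addrAC (pairDr _ (y - x)) pairZr addrAC subrr add0r.
have hd : dini_le d y v (pair (gd y) v) by rewrite -ddE; exact: dini_le_derive.
have hbreg : dini_le (fun u => d u - d x - pair (gd x) (u - x)) y v
    (pair (gd y) v + 0 + - pair (gd x) v).
  apply: dini_leD; first apply: dini_leD hd _.
    by apply: dini_le_lin => t; rewrite subrr mulr0.
  by apply: dini_le_lin => t; rewrite mulrN -lin_shift opprD.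
rewrite [pair _ v](_ : _ = pair (gf x) v + pair ((y - x) *m Hf x) v
    + A * (pair (gd y) v + 0 + - pair (gd x) v) + 0); last by rewrite !pairDl pairZl pairBl; ring.
apply: dini_leD; last by apply: dini_le_lin => t; rewrite subrr mulr0.
apply: dini_leD; last exact: dini_leZ A0 hbreg.
apply: dini_leD (dini_le_quad x y v (symHf x)).
by apply: dini_le_lin => t; rewrite opprD addrACA subrr add0r lin_shift.
Qed.

Hypothesis cpsi : convex_on D psi.
Hypothesis dd : forall y, differentiable d y.
Hypothesis ddE : forall y h, 'd d y h = pair (gd y) h.

Lemma subdiff_newton_step (A : R) x y : 0 <= A -> is_T D f psi d gf gd Hf A x y ->
  subdiff D psi y (newton_subgrad gf gd Hf A x y - gf y).
Proof.
move=> A0 [Dy ymin].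
rewrite (_ : _ - gf y = 0 - (gf x + (y - x) *m Hf x + A *: (gd y - gd x))); last first.
  by apply/rowP => i; rewrite !mxE; ring.
apply: (subdiff_sum_smooth cD (phi := model f (fun=> 0) d gf gd Hf A x)) cpsi Dy _ _ => z Dz.
  by rewrite pair0l /model !addr0; exact: ymin.
by apply: dini_le_model => //; [exact: diff_derivable | rewrite deriveE ?ddE].
Qed.

Lemma strongly_convex_monotone (sigma : R) x y :
  (forall y z, D y -> D z -> d y + pair (gd y) (z - y) + sigma / 2 * N (z - y) ^+ 2 <= d z) ->
  D x -> D y -> sigma * N (y - x) ^+ 2 <= pair (gd y - gd x) (y - x).
Proof.
move=> dsc Dx Dy; have := dsc _ _ Dx Dy; have := dsc _ _ Dy Dx.
have -> : x - y = - (y - x) by rewrite opprB.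
by rewrite (NN hN) pairNr pairBl; lra.
Qed.

Lemma newton_growth (A sigma mu : R) x y F' : D x -> D y -> 0 <= A ->
  (forall h, mu * N h ^+ 2 <= pair (h *m Hf x) h) ->
  sigma * N (y - x) ^+ 2 <= pair (gd y - gd x) (y - x) ->
  subdiff D psi x (F' - gf x) -> subdiff D psi y (newton_subgrad gf gd Hf A x y - gf y) ->
  (mu + A * sigma) * N (y - x) ^+ 2 <= dual_norm N F' * N (y - x).
Proof.
move=> Dx Dy A0 fsc dsc sx sy; have := subdiff_monotone Dx Dy sx sy.
rewrite (_ : newton_subgrad gf gd Hf A x y - gf y - (F' - gf x)
  = - F' - (y - x) *m Hf x - A *: (gd y - gd x)); last first.
  by apply/rowP => i; rewrite !mxE; ring.
rewrite !pairBl pairNl pairZl.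
have := pair_le_dual_norm hN F' (- (y - x)); rewrite pairNr (NN hN).
by have := fsc (y - x); have := ler_wpM2l A0 dsc; nra.
Qed.

Hypothesis gdLip : forall y z, D y -> D z -> dual_norm N (gd y - gd z) <= N (y - z).

Lemma newton_subgrad_le (A : R) x y : D x -> D y -> 0 <= A ->
  dual_norm N (newton_subgrad gf gd Hf A x y) <= L2 * N (y - x) ^+ 2 + A * N (y - x).
Proof.
move=> Dx Dy A0; apply: (dual_norm_le hN) => v v1.
rewrite /newton_subgrad pairBl pairZl.
have gdv : - pair (gd y - gd x) v <= N (y - x).
  rewrite -pairNr; apply: le_trans (pair_le_dual_norm hN _ _) _; rewrite (NN hN).
  have := gdLip Dy Dx; have := dual_norm_ge0 hN (gd y - gd x); have := N_ge0 hN v; nra.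
by have := gradient_taylor_le Dx Dy v1; have := ler_wpM2l A0 gdv; nra.
Qed.

End NewtonStep.

Lemma newton_rate_le (R : realType) (L2 sigma mu H g r : R) :
  0 < sigma -> 0 < mu -> 0 < H -> 0 <= L2 -> 0 <= g -> 0 <= r ->
  let A := sigma^-1 * Num.sqrt (H / 3 * g) in
  (mu + A * sigma) * r ^+ 2 <= g * r ->
  L2 * r ^+ 2 + A * r <=
    2 * (sigma^-1 + 3 * L2 / (2 * H)) / mu * Num.sqrt (H / 3) * (g * Num.sqrt g).
Proof.
move=> sigma0 mu0 H0 L20 g0 r0 A growth.
set s := Num.sqrt g; set q := Num.sqrt (H / 3).
have q0 : 0 < q by rewrite sqrtr_gt0 divr_gt0.
have s0 : 0 <= s := sqrtr_ge0 g.
have gs : g = s ^+ 2 by rewrite sqr_sqrtr.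
have Hq : H = 3 * q ^+ 2 by rewrite sqr_sqrtr ?divr_ge0 ?ltW //; field.
have Aqs : A = sigma^-1 * (q * s) by rewrite /A sqrtrM // divr_ge0 // ltW.
have A0 : 0 <= A by rewrite Aqs !mulr_ge0 // ?invr_ge0 ltW.
have key : (mu + q * s) * r <= s ^+ 2.
  have [->|r_neq0] := eqVneq r 0; first by rewrite mulr0 sqr_ge0.
  have rp : 0 < r by rewrite lt_neqAle eq_sym r_neq0.
  rewrite -gs -(ler_pM2r rp) -mulrA -expr2.
  by rewrite (_ : q * s = A * sigma) // Aqs mulrAC mulVf ?mul1r // gt_eqF.
have r_mu : r <= g / mu.
  by rewrite ler_pdivlMr // gs; have := mulr_ge0 (mulr_ge0 (ltW q0) s0) r0; nra.
have r_q : r <= s / q.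
  rewrite ler_pdivlMr //; have [s_eq0|s_neq0] := eqVneq s 0.
    by move: key; rewrite s_eq0 mulr0 addr0 expr0n /= pmulr_rle0 // => r_le0; nra.
  have sp : 0 < s by rewrite lt_neqAle eq_sym s_neq0.
  by rewrite -(ler_pM2l sp); nra.
rewrite [leRHS](_ : _ = L2 * ((g / mu) * (s / q)) + 2 * A * (g / mu)); last first.
  by rewrite Aqs -/s -/q gs Hq; field; rewrite !gt_eqF ?mulr_gt0 ?exprn_gt0.
apply: lerD; first by apply: ler_wpM2l => //; rewrite expr2; apply: ler_pM.
have : A * r <= A * (g / mu) by apply: ler_wpM2l.
by have := mulr_ge0 A0 (divr_ge0 g0 (ltW mu0)); lra.
Qed.

Unset Implicit Arguments. Set Strict Implicit.

Theorem theorem4 (R : realType) (n : nat) (N : 'rV[R]_n -> R)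
  (D : set 'rV[R]_n) (psi f d : 'rV[R]_n -> R)
  (gf gd : 'rV[R]_n -> 'rV[R]_n) (Hf : 'rV[R]_n -> 'M[R]_n)
  (L2 sigma mu H : R) (x : nat -> 'rV[R]_n) (Fp : nat -> 'rV[R]_n) :
  is_norm N ->
  closed_convex_fun D psi ->
  (* f convex, twice continuously differentiable, gradient gf, Hessian Hf *)
  convex_on setT f ->
  (forall y, differentiable f y) ->
  (forall y h, 'd f y h = pair (gf y) h) ->
  (forall y, differentiable gf y) ->
  (forall y h, 'd gf y h = h *m Hf y) ->
  continuous Hf ->
  0 <= L2 ->
  (forall y z, D y -> D z -> op_norm N (Hf y - Hf z) <= L2 * N (y - z)) ->
  (* scaling function d *)
  (forall y, differentiable d y) ->
  (forall y h, 'd d y h = pair (gd y) h) ->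
  0 < sigma <= 1 ->
  (forall y z, D y -> D z ->
     d y + pair (gd y) (z - y) + sigma / 2 * N (z - y) ^+ 2 <= d z) ->
  (forall y z, D y -> D z -> dual_norm N (gd y - gd z) <= N (y - z)) ->
  (* strong convexity of f on dom psi *)
  0 < mu ->
  (forall y h, D y -> mu * N h ^+ 2 <= pair (h *m Hf y) h) ->
  (* the method *)
  0 < H -> L2 <= H ->
  D (x 0%N) ->
  subdiff D (fun y => f y + psi y) (x 0%N) (Fp 0%N) ->
  (forall k : nat,
     let A := sigma^-1 * Num.sqrt (H / 3 * dual_norm N (Fp k)) in
     is_T D f psi d gf gd Hf A (x k) (x k.+1) /\
     Fp k.+1 = gf (x k.+1) - gf (x k) - (x k.+1 - x k) *m Hf (x k)
               - A *: (gd (x k.+1) - gd (x k))) ->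
  forall k : nat,
    let c := sigma^-1 + 3 * L2 / (2 * H) in
    dual_norm N (Fp k.+1) <=
      2 * c / mu * Num.sqrt (H / 3) *
      (dual_norm N (Fp k) * Num.sqrt (dual_norm N (Fp k))).
Proof.
move=> hN [cD cpsi _] _ df dfE dgf dgfE cHf L20 HfLip dd ddE /andP[sigma0 _] dsc gdLip
  mu0 fsc H0 _ Dx0 sub0 iter k; cbv zeta.
have symHf := hessian_sym df dfE dgf dgfE cHf.
have A0 j : 0 <= sigma^-1 * Num.sqrt (H / 3 * dual_norm N (Fp j)).
  by rewrite mulr_ge0 ?sqrtr_ge0 // invr_ge0 ltW.
have subgrad_psi j : D (x j) /\ subdiff D psi (x j) (Fp j - gf (x j)).
  case: j => [|j].
    split => //; apply: (subdiff_sum_smooth cD (phi := f)) cpsi Dx0 sub0 _ => z _.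
    by rewrite -dfE -deriveE //; apply/dini_le_derive/diff_derivable.
  have [[Dj1 _] hF] := iter j; split => //.
  have := subdiff_newton_step cD symHf cpsi dd ddE (A0 j) (iter j).1.
  by rewrite /newton_subgrad -hF.
have [Dx sx] := subgrad_psi k; have [Dy sy] := subgrad_psi k.+1; have [_ hF] := iter k.
rewrite hF; apply: le_trans (newton_subgrad_le hN cD dgf dgfE symHf L20 HfLip gdLip
  Dx Dy (A0 k)) _.
apply: newton_rate_le => //; [exact: dual_norm_ge0 | exact: N_ge0 |].
apply: (newton_growth hN Dx Dy (A0 k) (fun h => fsc _ h Dx)
  (strongly_convex_monotone hN dsc Dx Dy) sx).
by rewrite /newton_subgrad -hF.
Qed.
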